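(* Let $p$ be a prime and $l \ge 1$ an integer with $l \mid (p-1)$, and set $q = pl$. For $\Delta \in Z_q$ let $\omega_\Delta : Z_q \to Z_q$, $u \mapsto (u+\Delta) \bmod q$. Then $$ P = \{\omega_{1+il} : i \in \{0,1,\ldots,p-1\},\ i \neq (p-1)/l\} $$ consists of $p-1$ distinct cyclic permutations of $Z_q$ with orbit $Z_q$, $P$ is a $(pl,l)$-proper set, and $|P| = p-1 = \lfloor (pl-1)/l \rfloor$, i.e. $P$ attains the upper bound $|P| \le \lfloor (q-1)/l \rfloor$ valid for every $(q,l)$-proper set (so $P$ is quasiperfect).
   Context: Let $Z_q = \{0,1,\ldots,q-1\}$. A permutation $\sigma$ of $Z_q$ is called cyclic with orbit $Z_q$ if it consists of a single cycle containing all $q$ elements. For a permutation $\sigma$, $\sigma^\beta$ denotes its $\beta$-fold composition with itself. A set $P$ of cyclic permutations of $Z_q$ with orbit $Z_q$ is called $(q,l)$-proper (for an integer $l$ with $1 \le l < q$) if for every ordered pair $(u,v) \in Z_q^2$ there is at most one $\sigma \in P$ such that $v = \sigma^\beta[u]$ for some $\beta \in \{1,\ldots,l\}$. A $(q,l)$-proper set is called quasiperfect if $|P| = \lfloor (q-1)/l \rfloor$. *)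

From mathcomp Require Import all_boot all_fingroup.
Set Implicit Arguments. Unset Strict Implicit. Unset Printing Implicit Defensive.

(* Z_q is modelled as 'I_q; permutations of Z_q are {perm 'I_q}. *)

Definition cyclic_full (q : nat) (s : {perm 'I_q}) : Prop :=
  forall x : 'I_q, porbit s x = [set: 'I_q].

Definition reach (q l : nat) (s : {perm 'I_q}) (u v : 'I_q) : Prop :=
  exists beta : nat, 1 <= beta <= l /\ v = (s ^+ beta)%g u.

Definition proper_set (q l : nat) (P : {set {perm 'I_q}}) : Prop :=
  [/\ 1 <= l < q,
      (forall s, s \in P -> cyclic_full s) &
      forall (u v : 'I_q) (s1 s2 : {perm 'I_q}),
        s1 \in P -> s2 \in P -> reach l s1 u v -> reach l s2 u v -> s1 = s2].

Definition quasiperfect (q l : nat) (P : {set {perm 'I_q}}) : Prop :=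
  proper_set l P /\ #|P| = (q - 1) %/ l.

Definition omega_fun (q D : nat) (u : 'I_q) : 'I_q :=
  Ordinal (ltn_pmod (u + D) (leq_ltn_trans (leq0n u) (ltn_ord u))).

Lemma omega_fun_inj q D : injective (@omega_fun q D).
Proof.
move=> u v /(congr1 val) /= /eqP; rewrite eqn_modDr => /eqP.
by rewrite !modn_small // => /val_inj.
Qed.

Definition omega (q D : nat) : {perm 'I_q} := perm (@omega_fun_inj q D).

From mathcomp Require Import all_boot all_fingroup.
From mathcomp Require Import zify.
Set Implicit Arguments. Unset Strict Implicit. Unset Printing Implicit Defensive.

(* Since l | p - 1, the index i = (p-1)/l gives the step 1 + il = p, the only
   one sharing a factor with pl; every other step 1 + il is coprime to pl, so
   omega_(1+il) is a single cycle of length pl.  If u reaches v in b1 steps of omega_(1+il)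
   and in b2 steps of omega_(1+jl), with 1 <= b1, b2 <= l, then reducing
   b1 (1+il) = b2 (1+jl) mod l gives b1 = b2, after which b1 i = b1 j mod p
   with 0 < b1 < p forces i = j. *)

Lemma eqn_modMl_coprime p b i j :
  coprime p b -> (b * i == b * j %[mod p]) = (i == j %[mod p]).
Proof.
move=> cpb; wlog le_ij : i j / i <= j.
  move=> H; case: (leqP i j) => [/H //|/ltnW/H].
  by rewrite [LHS]eq_sym [RHS]eq_sym.
rewrite [LHS]eq_sym [RHS]eq_sym !eqn_mod_dvd ?leq_mul2l ?le_ij ?orbT //.
by rewrite -mulnBr Gauss_dvdr.
Qed.

Lemma eqn_modMr_pmul p l i j :
  0 < l -> (i * l == j * l %[mod p * l]) = (i == j %[mod p]).
Proof. by move=> l_gt0; rewrite -!muln_modl eqn_pmul2r. Qed.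

Lemma eqn_mod_range1 l a b :
  0 < a <= l -> 0 < b <= l -> (a == b %[mod l]) = (a == b).
Proof.
move=> /andP[a_gt0 a_le] /andP[b_gt0 b_le].
rewrite -(prednK a_gt0) -(prednK b_gt0) -[a.-1.+1]addn1 -[b.-1.+1]addn1.
by rewrite eqn_modDr eqn_add2r !modn_small // prednK.
Qed.

Lemma coprime_prime_lt p b : prime p -> 0 < b < p -> coprime p b.
Proof.
move=> p_pr /andP[b_gt0 b_lt]; rewrite prime_coprime //.
by apply: contraTN b_lt => /(dvdn_leq b_gt0); rewrite leqNgt.
Qed.

Lemma divn_mul_pred p l : 0 < p -> 0 < l -> p - 1 = (p * l - 1) %/ l.
Proof.
move=> p_gt0 l_gt0.
have -> : p * l - 1 = (p - 1) * l + (l - 1) by rewrite mulnBl mul1n; nia.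
by rewrite divnMDl // divn_small ?addn0 //; lia.
Qed.

Lemma divn_pred_lt n d : 0 < n -> (n - 1) %/ d < n.
Proof. by move=> n_gt0; rewrite (leq_ltn_trans (leq_div _ _)) // subn1 ltn_predL. Qed.

Lemma omegaX q D k (x : 'I_q) : val ((omega q D ^+ k)%g x) = (x + k * D) %% q.
Proof.
elim: k => [|k IH]; first by rewrite expg0 perm1 addn0 modn_small.
by rewrite expgSr permM permE /= IH modnDml mulSn -addnA [D + _]addnC.
Qed.

Lemma omega_cyclic_full q D : 0 < q -> coprime q D -> cyclic_full (omega q D).
Proof.
move=> q_gt0 /eqP cqD x; apply/setP => y; rewrite inE; apply/porbitP.
have [a _] := Bezoutl D q_gt0; rewrite cqD /dvdn => /eqP aD_opp.
(* a * D = -1 mod q, so a * (x - y) steps of size D lead from x to y *)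
exists (a * (x + (q - y))); apply: val_inj; rewrite omegaX /=.
rewrite -[in LHS](modn_small (ltn_ord y)); apply/eqP; rewrite eq_sym.
rewrite -(eqn_modDr (x + (q - y))).
have -> : y + (x + (q - y)) = q + x by have := ltn_ord y; lia.
have -> : x + a * (x + (q - y)) * D + (x + (q - y))
          = x + (x + (q - y)) * (1 + a * D) by nia.
by rewrite -modnDmr -modnMmr aD_opp muln0 mod0n addn0 modnDl modn_small.
Qed.

Lemma omega_step_inj p l (i j : 'I_p) : 0 < l ->
  omega (p * l) (1 + i * l) = omega (p * l) (1 + j * l) -> i = j.
Proof.
move=> l_gt0; have pl_gt0 : 0 < p * l by rewrite muln_gt0 l_gt0 (leq_ltn_trans (leq0n i) (ltn_ord i)).
move=> /(congr1 (fun s : {perm _} => val (s (Ordinal pl_gt0)))) /eqP.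
rewrite !permE /= !add0n eqn_modDl eqn_modMr_pmul // !modn_small //.
by move=> /eqP /val_inj.
Qed.

Section QuasiperfectConstruction.

Variables p l : nat.
Hypotheses (p_pr : prime p) (l_gt0 : 0 < l) (l_dvd : l %| p - 1).

Lemma ltn_step_prime : l < p.
Proof.
have p_gt1 := prime_gt1 p_pr.
by have := dvdn_leq (_ : 0 < p - 1) l_dvd; lia.
Qed.

Lemma coprime_step (i : 'I_p) :
  (i : nat) != (p - 1) %/ l -> coprime (p * l) (1 + i * l).
Proof.
move=> i_ne; rewrite coprimeMl {2}/coprime addnC gcdnMDl gcdn1 andbT.
rewrite prime_coprime //; apply: contra i_ne => p_dvd.
have : l * i == l * ((p - 1) %/ l) %[mod p].
  rewrite -(eqn_modDl 1) [l * i]mulnC [l * _]mulnC divnK // subnKC.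
    by rewrite modnn addnC (eqP p_dvd).
  exact: prime_gt0.
have l_cop : coprime p l by rewrite coprime_prime_lt // l_gt0 ltn_step_prime.
rewrite (eqn_modMl_coprime _ _ l_cop) !modn_small //.
exact/divn_pred_lt/prime_gt0.
Qed.

Lemma reach_omega_step_inj (i j : 'I_p) (u v : 'I_(p * l)) :
  reach l (omega (p * l) (1 + i * l)) u v ->
  reach l (omega (p * l) (1 + j * l)) u v -> i = j.
Proof.
move=> [b1 [b1_range ->]] [b2 [b2_range /(congr1 val)]].
rewrite !omegaX => /esym/eqP; rewrite eqn_modDl => b_eq.
have b12 : b1 = b2.
  apply/eqP; rewrite -(eqn_mod_range1 b1_range b2_range).
  move: b_eq => /eqP/(congr1 (modn^~ l)); rewrite !modn_dvdm ?dvdn_mull //.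
  by rewrite !mulnDr !muln1 !mulnA (addnC b1) (addnC b2) !modnMDl => ->.
have b1_cop : coprime p b1.
  case/andP: b1_range => b1_gt0 b1_le.
  by rewrite coprime_prime_lt // b1_gt0 (leq_ltn_trans b1_le ltn_step_prime).
move: b_eq; rewrite -{}b12 !mulnDr !muln1 !mulnA eqn_modDl eqn_modMr_pmul //.
by rewrite (eqn_modMl_coprime _ _ b1_cop) !modn_small // => /eqP /val_inj.
Qed.

End QuasiperfectConstruction.

Theorem theorem2 (p l : nat) (hp : prime p) (hl : 0 < l) (hdvd : l %| p - 1) :
  let q := p * l in
  let P := [set omega q (1 + i * l) | i : 'I_p & (i : nat) != (p - 1) %/ l] in
  [/\ #|P| = p - 1,
      (forall s, s \in P -> cyclic_full s),
      proper_set l P,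
      p - 1 = (p * l - 1) %/ l
    & quasiperfect l P].
Proof.
move=> q P.
have p_gt0 := prime_gt0 hp.
have i0_lt := divn_pred_lt l p_gt0.
have cardP : #|P| = p - 1.
  rewrite card_in_imset; last by move=> i j _ _; apply: omega_step_inj.
  rewrite (@eq_card _ _ (predC1 (Ordinal i0_lt))).
    by rewrite cardC1 card_ord subn1.
  by move=> i; rewrite !inE -val_eqE.
have cycP s : s \in P -> cyclic_full s.
  move=> /imsetP[i]; rewrite inE => i_ne ->.
  by apply: omega_cyclic_full; [rewrite muln_gt0 p_gt0 | apply: coprime_step].
have properP : proper_set l P.
  split; first by rewrite hl ltn_Pmull ?prime_gt1.
    exact: cycP.
  move=> u v _ _ /imsetP[i _ ->] /imsetP[j _ ->] reach_i reach_j.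
  by rewrite (reach_omega_step_inj hp hl hdvd reach_i reach_j).
have floor_eq := divn_mul_pred p_gt0 hl.
by split=> //; split=> //; rewrite cardP.
Qed.
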